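(* Let $A\in\mathbb{R}^{n\times n}$ be stable and Metzler. Let $\mathcal{C}_1,\dots,\mathcal{C}_r$ be nonempty, pairwise disjoint subsets of $\{1,\dots,n\}$ whose union is $\{1,\dots,n\}$, let $\Pi\in\mathbb{R}^{n\times r}$ with $\Pi_{ij}=1$ if $i\in\mathcal{C}_j$ and $0$ otherwise, let $\alpha\ge 0$, and let $A_r^{(0)}:=(\Pi^\top\Pi)^{-1}\Pi^\top A\Pi-\alpha I_r$ be stable and irreducible. Let $\mu_1$ be the real eigenvalue of $A_r^{(0)}$ with $\mu_1<0$ and ${\rm Re}(\mu)<\mu_1$ for every other eigenvalue $\mu$ of $A_r^{(0)}$, and let $v_1,w_1$ be positive vectors with $A_r^{(0)}v_1=\mu_1 v_1$, $w_1^\top A_r^{(0)}=\mu_1 w_1^\top$, $w_1^\top v_1=1$. For any real $\epsilon>0$ with $\mu_1+\epsilon\le 0$, define $$\bar{A}_r:=A_r^{(0)}-(\mu_1+\epsilon)v_1w_1^\top .$$ Then for any real $\gamma>0$ satisfying $-\gamma I_r\le A_r^{(0)}$ (entrywise), every matrix in $$S_{A_r}(A_r^{(0)},\epsilon,\gamma):=\{A_r\in\mathbb{R}^{r\times r}\,:\,-\gamma I_r\le A_r\le \bar{A}_r\}$$ is stable and Metzler, and $A_r^{(0)}\in S_{A_r}(A_r^{(0)},\epsilon,\gamma)$. Moreover, for every $A_r\in S_{A_r}(A_r^{(0)},\epsilon,\gamma)$, the real parts of all eigenvalues of $A_r$ are less than or equal to $-\epsilon$.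
   Context: For matrices $M,N$ of the same size, $M\le N$ means $M_{ij}\le N_{ij}$ for all $(i,j)$. A matrix is stable if all its eigenvalues have negative real part, and Metzler if all its off-diagonal entries are nonnegative. $A_r^{(0)}$ irreducible means the directed graph on $\{1,\dots,r\}$ with an edge $i\to j$ whenever $i\ne j$ and $(A_r^{(0)})_{ij}\ne 0$ is strongly connected. (Such $\mu_1,v_1,w_1$ exist under these hypotheses.) *)

(* reals modelled by an arbitrary real closed field R,
   complex numbers by R[i] (mathcomp-real-closed). *)
From HB Require Import structures.
From mathcomp Require Import all_boot all_order all_algebra.
From mathcomp Require Import complex.
Set Implicit Arguments. Unset Strict Implicit. Unset Printing Implicit Defensive.
Import Order.TTheory GRing.Theory Num.Theory.
Local Open Scope ring_scope.

Definition cmx (R : rcfType) (m n : nat) (A : 'M[R]_(m, n)) : 'M[R[i]]_(m, n) :=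
  map_mx (real_complex R) A.

Definition ceig (R : rcfType) (n : nat) (A : 'M[R]_n) (z : R[i]) : bool :=
  eigenvalue (cmx A) z.

Definition stable (R : rcfType) (n : nat) (A : 'M[R]_n) : Prop :=
  forall z : R[i], ceig A z -> complex.Re z < 0.

Definition metzler (R : rcfType) (n : nat) (A : 'M[R]_n) : Prop :=
  forall i j : 'I_n, i != j -> 0 <= A i j.

Definition mxle (R : rcfType) (m n : nat) (M N : 'M[R]_(m, n)) : Prop :=
  forall i j, M i j <= N i j.

Definition mx_irreducible (R : rcfType) (n : nat) (A : 'M[R]_n) : Prop :=
  forall i j : 'I_n, connect (fun k l : 'I_n => (k != l) && (A k l != 0)) i j.

Definition clustermx (R : rcfType) (n r : nat) (C : 'I_r -> {set 'I_n}) : 'M[R]_(n, r) :=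
  \matrix_(i < n, j < r) (if i \in C j then 1 else 0).

Definition Ar0 (R : rcfType) (n r : nat) (A : 'M[R]_n) (C : 'I_r -> {set 'I_n}) (alpha : R)
  : 'M[R]_r :=
  let Pi := clustermx R C in
  invmx (Pi^T *m Pi) *m Pi^T *m A *m Pi - alpha%:M.

Definition in_S (R : rcfType) (r : nat) (Abar : 'M[R]_r) (gamma : R) (M : 'M[R]_r) : Prop :=
  mxle (- gamma%:M) M /\ mxle M Abar.

From HB Require Import structures.
From mathcomp Require Import all_boot all_order all_algebra.
From mathcomp Require Import complex.
Set Implicit Arguments.
Unset Strict Implicit.
Unset Printing Implicit Defensive.
Import Order.TTheory GRing.Theory Num.Theory.
Local Open Scope ring_scope.

(* The rank-one update keeps the positive eigenvector v1 of A_r^(0) but moves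
   its eigenvalue from mu1 to -eps, so every A_r between -gamma I_r and Abar is
   Metzler with A_r v1 <= -eps v1 entrywise.  For a Metzler M, a positive v
   with M v <= lam v and a large enough shift g, N = M + g I is nonnegative;
   for a left eigenvector u of N with eigenvalue z,
   |z| sum_j |u_j| v_j <= sum_i |u_i| (N v)_i <= (lam + g) sum_i |u_i| v_i,
   so |z| <= lam + g, and shifting back gives Re z <= lam. *)

Section MetzlerSpectralBound.
Variables (R : rcfType) (r : nat).
Implicit Types (M N : 'M[R]_r) (v : 'cV[R]_r) (g lam : R) (z : R[i]).

Lemma mxle_mulmxr M N v :
  mxle M N -> (forall i, 0 <= v i 0) -> mxle (M *m v) (N *m v).
Proof.
move=> le_MN v_ge0 i k; rewrite (ord1 k) !mxE.
by apply: ler_sum => j _; rewrite ler_wpM2r.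
Qed.

Lemma metzler_ge_scalar g M : mxle (- g%:M) M -> metzler M.
Proof.
by move=> le_gM i j ij; have := le_gM i j; rewrite !mxE (negbTE ij) oppr0.
Qed.

Lemma ceig_add_scalar M g z : ceig M z -> ceig (M + g%:M) (z + g%:C)%C.
Proof.
case/eigenvalueP=> u uM u_neq0; apply/eigenvalueP; exists u => //.
rewrite /cmx map_mxD map_scalar_mx mulmxDr -/(cmx M) uM mul_mx_scalar.
by rewrite scalerDl.
Qed.

Lemma ceig_norm_le_nonneg N v lam z :
  (forall i j, 0 <= N i j) -> (forall i, 0 < v i 0) ->
  mxle (N *m v) (lam *: v) -> ceig N z -> `|z| <= lam%:C%C.
Proof.
move=> N_ge0 v_gt0 Nv_le /eigenvalueP [u uN u_neq0].
pose S := \sum_j `|u 0 j| * (v j 0)%:C%C.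
have S_gt0 : 0 < S.
  have [j uj_neq0] : exists j, u 0 j != 0.
    apply/existsP; move: u_neq0; apply: contraR.
    rewrite negb_exists => /forallP u0.
    by apply/eqP/matrixP => a b; rewrite (ord1 a) mxE; apply/eqP/negPn/u0.
  rewrite /S (bigD1 j) //= ltr_wpDr //.
    by apply: sumr_ge0 => k _; rewrite mulr_ge0 // ler0c ltW.
  by rewrite mulr_gt0 ?normr_gt0 // ltcR.
have zu j : z * u 0 j = \sum_i u 0 i * (N i j)%:C%C.
  move/matrixP: uN => /(_ 0 j); rewrite !mxE => <-.
  by apply: eq_bigr => i _; rewrite mxE.
have Nv_row i : \sum_j (N i j)%:C%C * (v j 0)%:C%C <= lam%:C%C * (v i 0)%:C%C.
  have -> : \sum_j (N i j)%:C%C * (v j 0)%:C%C = (\sum_j N i j * v j 0)%:C%C.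
    by rewrite rmorph_sum; apply: eq_bigr => j _; rewrite rmorphM.
  by rewrite -rmorphM lecR; have := Nv_le i 0; rewrite !mxE.
rewrite -(ler_pM2r S_gt0) {1}/S mulr_sumr.
apply: (@le_trans _ _ (\sum_j \sum_i `|u 0 i| * (N i j)%:C%C * (v j 0)%:C%C)).
  apply: ler_sum => j _; rewrite mulrA -normrM zu -mulr_suml.
  apply: ler_wpM2r; first by rewrite ler0c ltW.
  apply: (le_trans (ler_norm_sum _ _ _)); apply: ler_sum => i _.
  by rewrite normrM (@ger0_norm _ (N i j)%:C%C) ?ler0c.
rewrite exchange_big /S mulr_sumr; apply: ler_sum => i _ /=.
under eq_bigr => j _ do rewrite -mulrA.
by rewrite -mulr_sumr mulrCA ler_wpM2l.
Qed.

Lemma metzler_ceig_Re_le M v lam z :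
  metzler M -> (forall i, 0 < v i 0) ->
  mxle (M *m v) (lam *: v) -> ceig M z -> complex.Re z <= lam.
Proof.
move=> M_metzler v_gt0 Mv_le Mz.
pose g := \sum_i `|M i i|.
have N_ge0 i j : 0 <= (M + g%:M) i j.
  rewrite !mxE; case: eqVneq => [<-|/M_metzler]; last by rewrite addr0.
  have /andP[Mii_ge _] : - g <= M i i <= g.
    by rewrite -ler_norml /g (bigD1 i) //= lerDl sumr_ge0.
  by rewrite mulr1n -lerBlDr sub0r.
have Nv_le : mxle ((M + g%:M) *m v) ((lam + g) *: v).
  move=> i k; have := Mv_le i k.
  by rewrite mulmxDl mul_scalar_mx scalerDl !mxE lerD2r.
have := ceig_norm_le_nonneg N_ge0 v_gt0 Nv_le (ceig_add_scalar g Mz).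
move=> /(le_trans (normc_ge_Re _)); rewrite lecR => /(le_trans (ler_norm _)).
by case: z {Mz} => a b /=; rewrite lerD2r.
Qed.

End MetzlerSpectralBound.

Lemma rank_one_update_eigvec (R : rcfType) (r : nat) (B : 'M[R]_r)
    (v w : 'cV[R]_r) (mu c : R) :
  B *m v = mu *: v -> w^T *m v = 1%:M ->
  (B - c *: (v *m w^T)) *m v = (mu - c) *: v.
Proof.
move=> Bv wv; rewrite mulmxBl Bv -scalemxAl -mulmxA wv mulmx1.
by rewrite scalerBl.
Qed.

Lemma mxle_sub_rank_one (R : rcfType) (r : nat) (B : 'M[R]_r)
    (v w : 'cV[R]_r) (c : R) :
  c <= 0 -> (forall i, 0 <= v i 0) -> (forall i, 0 <= w i 0) ->
  mxle B (B - c *: (v *m w^T)).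
Proof.
move=> c_le0 v_ge0 w_ge0 i j; rewrite !mxE big_ord1 !mxE.
by rewrite lerDl -mulNr mulr_ge0 ?oppr_ge0 ?mulr_ge0.
Qed.

Theorem theorem1 (R : rcfType) (n r : nat) (A : 'M[R]_n)
  (C : 'I_r -> {set 'I_n}) (alpha : R)
  (mu1 : R) (v1 w1 : 'cV[R]_r) (eps gamma : R) :
  stable A -> metzler A ->
  (forall j, C j != set0) ->
  (forall j k, j != k -> [disjoint C j & C k]) ->
  (forall i : 'I_n, exists j, i \in C j) ->
  0 <= alpha ->
  stable (Ar0 A C alpha) -> mx_irreducible (Ar0 A C alpha) ->
  mu1 < 0 -> ceig (Ar0 A C alpha) (mu1%:C)%C ->
  (forall z : R[i], ceig (Ar0 A C alpha) z -> z != (mu1%:C)%C -> complex.Re z < mu1) ->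
  (forall i, 0 < v1 i 0) -> (forall i, 0 < w1 i 0) ->
  Ar0 A C alpha *m v1 = mu1 *: v1 ->
  w1^T *m Ar0 A C alpha = mu1 *: w1^T ->
  w1^T *m v1 = 1%:M ->
  0 < eps -> mu1 + eps <= 0 ->
  0 < gamma -> mxle (- gamma%:M) (Ar0 A C alpha) ->
  let Abar := Ar0 A C alpha - (mu1 + eps) *: (v1 *m w1^T) in
  (forall M, in_S Abar gamma M -> stable M /\ metzler M) /\
  in_S Abar gamma (Ar0 A C alpha) /\
  (forall M, in_S Abar gamma M ->
     forall z : R[i], ceig M z -> complex.Re z <= - eps).
Proof.
move=> _ _ _ _ _ _ _ _ _ _ _ v1_gt0 w1_gt0 Bv1 _ w1v1 eps_gt0 mu1eps_le0 _ Ble.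
move=> Abar.
have Abar_v1 : Abar *m v1 = - eps *: v1.
  by rewrite /Abar (rank_one_update_eigvec (mu1 + eps) Bv1 w1v1) opprD addNKr.
have Re_le M : in_S Abar gamma M ->
    forall z : R[i], ceig M z -> complex.Re z <= - eps.
  move=> [M_ge M_le] z.
  apply: (metzler_ceig_Re_le (metzler_ge_scalar M_ge) v1_gt0).
  by rewrite -Abar_v1; apply: mxle_mulmxr => // i; apply: ltW.
split; last split=> //.
  move=> M SM; split; last exact: metzler_ge_scalar SM.1.
  by move=> z /(Re_le M SM)/le_lt_trans; apply; rewrite oppr_lt0.
split=> //; apply: mxle_sub_rank_one => // i; exact: ltW.
Qed.
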